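(* In the setting described in the context, the optimal value of \[ O(\mathbf y)=\min_{\tilde{\mathbf y}\in\{-1,1\}^n}\ \frac12\sum_{i=1}^n(1-y_i\tilde y_i)\quad\text{s.t.}\quad \operatorname{sign}(\hat p_t)\sum_{i=1}^n\tilde y_iQ_t^i<0 \] equals $k'=\min\{k\in\{1,\dots,n\}: P_k>S/2\}$, and this set is nonempty. Moreover, flipping exactly the labels of the training points indexed by $a_{(1)},\dots,a_{(k')}$ is an optimal solution.
   Context: Let $n\ge1$, let $Q_t^1,\dots,Q_t^n\in\mathbb R$, and let $\mathbf y\in\{-1,1\}^n$. Put $\hat p_t=\sum_{i=1}^n y_iQ_t^i$ and assume $\hat p_t\ne0$. Define $a_i=\operatorname{sign}(\hat p_t)\,y_iQ_t^i$ for $i\in[n]$ and $S=\sum_{i=1}^n a_i$, so that $S=|\hat p_t|>0$. Let $a_{(1)}\ge a_{(2)}\ge\dots\ge a_{(n)}$ be the $a_i$ sorted in nonincreasing order, and let $P_k=\sum_{j=1}^k a_{(j)}$. The quantity $\frac12\sum_i(1-y_i\tilde y_i)$ is the number of indices $i$ with $\tilde y_i\neq y_i$. *)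

From HB Require Import structures.
From mathcomp Require Import all_boot all_order all_algebra all_fingroup.
Set Implicit Arguments. Unset Strict Implicit. Unset Printing Implicit Defensive.
Import Order.TTheory GRing.Theory Num.Theory.
Local Open Scope ring_scope.

Section Defs.
Variables (R : realFieldType) (n : nat).

Definition pm1 (v : 'I_n -> R) : Prop := forall i, v i = 1 \/ v i = -1.

Definition phat (y Q : 'I_n -> R) : R := \sum_(i < n) y i * Q i.

Definition aval (y Q : 'I_n -> R) (i : 'I_n) : R := Num.sg (phat y Q) * (y i * Q i).

Definition Ssum (y Q : 'I_n -> R) : R := \sum_(i < n) aval y Q i.

(* P_k = sum of the k largest a's, given the sorting permutation s
   (a_(j+1) = a (s j) in 0-based indexing) *)
Definition Psum (y Q : 'I_n -> R) (s : 'S_n) (k : nat) : R :=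
  \sum_(j < n | (j < k)%N) aval y Q (s j).

Definition sorts_noninc (y Q : 'I_n -> R) (s : 'S_n) : Prop :=
  forall j1 j2 : 'I_n, (j1 <= j2)%N -> aval y Q (s j2) <= aval y Q (s j1).

Definition flip_cost (y yt : 'I_n -> R) : R := 2^-1 * \sum_(i < n) (1 - y i * yt i).

Definition feasible (y Q yt : 'I_n -> R) : Prop :=
  Num.sg (phat y Q) * (\sum_(i < n) yt i * Q i) < 0.

Definition good_k (y Q : 'I_n -> R) (s : 'S_n) (k : nat) : Prop :=
  [/\ (1 <= k)%N, (k <= n)%N & Ssum y Q / 2 < Psum y Q s k].

(* flip exactly the labels of the points indexed by a_(1),...,a_(k) *)
Definition flipped (y : 'I_n -> R) (s : 'S_n) (k : nat) (i : 'I_n) : R :=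
  if ((s^-1)%g i < k)%N then - y i else y i.

End Defs.

From HB Require Import structures.
From mathcomp Require Import all_boot all_order all_algebra all_fingroup.
From mathcomp Require Import ring lra zify.
Set Implicit Arguments. Unset Strict Implicit. Unset Printing Implicit Defensive.
Import Order.TTheory GRing.Theory Num.Theory.
Local Open Scope ring_scope.

(* Flipping the labels in a set F costs #|F| and changes sign(p) * sum_i yt_i Q_i
   from S to S - 2 sum_(i in F) a_i, so a flip set is feasible exactly when its
   a-mass exceeds S/2.  Among sets of a given size the a-mass is maximised by
   the prefix of the nonincreasing order, so the cheapest feasible flip is the
   shortest prefix with mass beyond S/2. *)

Lemma card_ord_prefix (n k : nat) :
  (k <= n)%N -> #|[pred j : 'I_n | (j < k)%N]| = k.
Proof.
move=> kn; rewrite -sum1_card (eq_bigl (fun j : 'I_n => (j < k)%N)) //.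
by rewrite (big_ord_narrow kn) sum1_card card_ord.
Qed.

Lemma sum_le_sum_prefix (R : realDomainType) (n : nat) (b : 'I_n -> R) :
  (forall j1 j2 : 'I_n, (j1 <= j2)%N -> b j2 <= b j1) ->
  forall P : pred 'I_n, \sum_(j in P) b j <= \sum_(j < n | (j < #|P|)%N) b j.
Proof.
case: n b => [|m] b b_noninc P; first by rewrite !big_ord0.
set k := #|P|.
have k_le : (k <= m.+1)%N by rewrite -[m.+1]card_ord max_card.
have indE (A : pred 'I_m.+1) (f : 'I_m.+1 -> R) :
    \sum_(j | A j) f j = \sum_j (A j)%:R * f j.
  by rewrite big_mkcond; apply: eq_bigr => j _; case: (A j); rewrite ?mul1r ?mul0r.
have indC (A : pred 'I_m.+1) : \sum_j ((A j)%:R : R) = (#|A|)%:R.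
  by rewrite -sumr_const (indE A); apply: eq_bigr => j _; rewrite mulr1.
have card_prefix : \sum_(j < m.+1) ((j < k)%N%:R : R) = k%:R.
  by rewrite (indC (fun j : 'I_m.+1 => (j < k)%N)) card_ord_prefix.
have card_P : \sum_(j < m.+1) ((j \in P)%:R : R) = k%:R by rewrite (indC (mem P)).
(* The indicator difference has total weight 0, so any threshold t may be
   subtracted from b; with t = b (k-1) every term becomes nonpositive. *)
set t := b (inord k.-1).
have diffE : \sum_(j in P) b j - \sum_(j < m.+1 | (j < k)%N) b j =
    \sum_j ((j \in P)%:R - (j < k)%N%:R) * (b j - t).
  rewrite (indE (mem P)) (indE (fun j : 'I_m.+1 => (j < k)%N)).
  under [RHS]eq_bigr => j _ do rewrite mulrBl !mulrBr.
  rewrite !sumrB -!mulr_suml card_P card_prefix; ring.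
have t_idx : nat_of_ord (inord k.-1 : 'I_m.+1) = k.-1 by rewrite inordK //; lia.
have t_le (j : 'I_m.+1) : (j < k)%N -> t <= b j.
  by move=> jk; apply: b_noninc; rewrite t_idx; lia.
have le_t (j : 'I_m.+1) : (k <= j)%N -> b j <= t.
  by move=> kj; apply: b_noninc; rewrite t_idx; lia.
rewrite -subr_le0 diffE; apply: sumr_le0 => j _.
case: (ltnP j k) => jk.
  rewrite mulr_le0_ge0 ?subr_ge0 ?t_le //.
  by case: (j \in P); rewrite ?subrr ?sub0r ?oppr_le0.
by rewrite mulr_ge0_le0 ?subr_ge0 ?subr_le0 ?le_t ?ler0n.
Qed.

Lemma Ssum_norm (R : realFieldType) (n : nat) (y Q : 'I_n -> R) :
  Ssum y Q = `|phat y Q|.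
Proof. by rewrite /Ssum /aval -mulr_sumr normrEsg. Qed.

Section Flip.
Variables (R : realFieldType) (n : nat) (y Q : 'I_n -> R).
Hypothesis y_pm1 : pm1 y.

Definition flip_set (F : pred 'I_n) (i : 'I_n) : R :=
  if i \in F then - y i else y i.

Lemma pm1_sqr i : y i * y i = 1.
Proof. by case: (y_pm1 i) => ->; rewrite ?mulrNN mulr1. Qed.

Lemma pm1_flip_set F : pm1 (flip_set F).
Proof.
move=> i; rewrite /flip_set.
by case: (y_pm1 i) => ->; case: (i \in F); rewrite ?opprK; [right|left|left|right].
Qed.

Lemma pm1_eq_flip_set (yt : 'I_n -> R) :
  pm1 yt -> yt =1 flip_set [pred i | yt i != y i].
Proof.
move=> yt_pm1 i; rewrite /flip_set inE.
case: (y_pm1 i) => ->; case: (yt_pm1 i) => ->; rewrite ?eqxx ?opprK //.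
- by rewrite ifT //; apply/eqP => e; lra.
- by rewrite ifT //; apply/eqP => e; lra.
Qed.

Lemma flip_cost_flip_set (yt : 'I_n -> R) (F : pred 'I_n) :
  yt =1 flip_set F -> flip_cost y yt = #|F|%:R.
Proof.
move=> ytE; rewrite /flip_cost (_ : \sum_i _ = \sum_(i in F) 2).
  by rewrite sumr_const mulrnAr mulVf ?pnatr_eq0.
rewrite [RHS]big_mkcond; apply: eq_bigr => i _.
rewrite ytE /flip_set; case: (i \in F); rewrite ?mulrN pm1_sqr; lra.
Qed.

Lemma sg_sum_flip_set (yt : 'I_n -> R) (F : pred 'I_n) :
  yt =1 flip_set F ->
  Num.sg (phat y Q) * (\sum_i yt i * Q i) =
  Ssum y Q - 2 * \sum_(i in F) aval y Q i.
Proof.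
move=> ytE; rewrite /Ssum !mulr_sumr [X in _ - X]big_mkcond -sumrB.
apply: eq_bigr => i _; rewrite ytE /flip_set /aval.
by case: (i \in F); ring.
Qed.

Lemma feasible_flip_set (yt : 'I_n -> R) (F : pred 'I_n) :
  yt =1 flip_set F ->
  feasible y Q yt <-> Ssum y Q / 2 < \sum_(i in F) aval y Q i.
Proof. by move=> ytE; rewrite /feasible (sg_sum_flip_set ytE); split; lra. Qed.

End Flip.

Section SortedPrefix.
Variables (R : realFieldType) (n : nat) (y Q : 'I_n -> R) (s : 'S_n).
Hypothesis s_sorts : sorts_noninc y Q s.

Definition prefix_set (k : nat) : pred 'I_n := [pred i | ((s^-1)%g i < k)%N].

Lemma sum_aval_perm (F : pred 'I_n) :
  \sum_(i in F) aval y Q i = \sum_(j | s j \in F) aval y Q (s j).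
Proof. exact: (reindex_inj perm_inj). Qed.

Lemma card_perm (F : pred 'I_n) : #|F| = #|[pred j | s j \in F]|.
Proof. by rewrite -!sum1_card; apply: (reindex_inj perm_inj). Qed.

Lemma sum_prefix_set k : \sum_(i in prefix_set k) aval y Q i = Psum y Q s k.
Proof. by rewrite sum_aval_perm; apply: eq_bigl => j; rewrite inE permK. Qed.

Lemma card_prefix_set k : (k <= n)%N -> #|prefix_set k| = k.
Proof.
move=> kn; rewrite card_perm -[RHS](card_ord_prefix kn).
by apply: eq_card => j; rewrite !inE permK.
Qed.

Lemma sum_le_Psum_card (F : pred 'I_n) :
  \sum_(i in F) aval y Q i <= Psum y Q s #|F|.
Proof.
rewrite sum_aval_perm card_perm.
exact: (sum_le_sum_prefix s_sorts [pred j | s j \in F]).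
Qed.

Lemma Psum_full : Psum y Q s n = Ssum y Q.
Proof.
rewrite /Psum (eq_bigl xpredT) => [|j]; last by rewrite ltn_ord.
by rewrite /Ssum [RHS](reindex_inj (@perm_inj _ s)).
Qed.

Lemma good_k_full : (1 <= n)%N -> phat y Q != 0 -> good_k y Q s n.
Proof.
move=> n_gt0 p_neq0; split=> //; rewrite Psum_full.
have : 0 < Ssum y Q by rewrite Ssum_norm normr_gt0.
lra.
Qed.

Lemma good_k_feasible (yt : 'I_n -> R) : pm1 y -> pm1 yt -> feasible y Q yt ->
  good_k y Q s #|[pred i | yt i != y i]|.
Proof.
move=> y_pm1 yt_pm1 /(feasible_flip_set Q (pm1_eq_flip_set y_pm1 yt_pm1)).
set F := [pred i | yt i != y i] => mass_F.
have S_ge0 : 0 <= Ssum y Q by rewrite Ssum_norm.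
have mass_le := sum_le_Psum_card F.
split.
- rewrite lt0n; apply/negP => /eqP cardF0.
  by move: mass_le; rewrite cardF0 /Psum [X in _ <= X]big_pred0 //; lra.
- by rewrite -[X in (_ <= X)%N]card_ord max_card.
- lra.
Qed.

End SortedPrefix.

Theorem mainTheorem7 (R : realFieldType) (n : nat) (Q y : 'I_n -> R)
    (s : 'S_n) :
  (1 <= n)%N -> pm1 y -> phat y Q != 0 -> sorts_noninc y Q s ->
  (exists k : nat, good_k y Q s k) /\
  (forall k' : nat,
     good_k y Q s k' -> (forall k : nat, good_k y Q s k -> (k' <= k)%N) ->
     [/\ pm1 (flipped y s k'),
         feasible y Q (flipped y s k'),
         flip_cost y (flipped y s k') = k'%:R &
         forall yt : 'I_n -> R, pm1 yt -> feasible y Q yt ->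
           k'%:R <= flip_cost y yt]).
Proof.
move=> n_gt0 y_pm1 p_neq0 s_sorts; split; first by exists n; apply: good_k_full.
move=> k' [_ k'_le mass_k'] k'_min.
have flipE : flipped y s k' =1 flip_set y (prefix_set s k') by [].
split.
- by move=> i; rewrite flipE; apply: pm1_flip_set.
- by apply/(feasible_flip_set Q flipE); rewrite sum_prefix_set.
- by rewrite (flip_cost_flip_set y_pm1 flipE) card_prefix_set.
move=> yt yt_pm1 yt_feas.
rewrite (flip_cost_flip_set y_pm1 (pm1_eq_flip_set y_pm1 yt_pm1)) ler_nat.
by apply/k'_min/good_k_feasible.
Qed.
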